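(* Let $T, L, \ell$ be positive integers and let $\underline{C}, \overline{C}, \overline{V}, V$ be real numbers. Let $\mathcal{TK}=\{(t,k): t\in[1,T]_{\mathbb{Z}},\ k\in[\min\{t+L-1,T\},T]_{\mathbb{Z}}\}$. Consider the polytope $P$ in the variables $\alpha_t$ ($t\in[1,T]_{\mathbb{Z}}$), $\beta_{tk}$ ($(t,k)\in\mathcal{TK}$), $\gamma_{tk}$ ($t\in[L,T-\ell-1]_{\mathbb{Z}}$, $k\in[t+\ell+1,T]_{\mathbb{Z}}$), $\theta_t$ ($t\in[T-\ell,T]_{\mathbb{Z}}$) and $q^s_{tk}$ ($(t,k)\in\mathcal{TK}$, $s\in[t,k]_{\mathbb{Z}}$) defined by \begin{align*} &\textstyle\sum_{t=1}^{T}\alpha_t\le 1,\\ &\textstyle -\alpha_t+\sum_{k=t+L-1}^{T}\beta_{tk}-\sum_{k=L}^{t-\ell-1}\gamma_{kt}=0, && \forall t\in[1,T]_{\mathbb{Z}},\\ &\textstyle -\sum_{k=1}^{t-L+1}\beta_{kt}+\sum_{k=t+\ell+1}^{T}\gamma_{tk}\le 0, && \forall t\in[L,T-\ell-1]_{\mathbb{Z}},\\ &\textstyle \theta_t-\sum_{k=1}^{t-L+1}\beta_{kt}=0, && \forall t\in[T-\ell,T]_{\mathbb{Z}},\\ &\underline{C}\beta_{tk}\le q^s_{tk}\le \overline{C}\beta_{tk}, && \forall s\in[t,k]_{\mathbb{Z}},\ (t,k)\in\mathcal{TK},\\ &q^t_{tk}\le \overline{V}\beta_{tk}, && \forall (t,k)\in\mathcal{TK},\\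 &q^k_{tk}\le \overline{V}\beta_{tk}, && \forall (t,k)\in\mathcal{TK} \text{ with } k\le T-1,\\ &q^{s-1}_{tk}-q^s_{tk}\le V\beta_{tk},\quad q^{s}_{tk}-q^{s-1}_{tk}\le V\beta_{tk}, && \forall s\in[t+1,k]_{\mathbb{Z}},\ (t,k)\in\mathcal{TK},\\ &\alpha,\beta,\gamma\ge 0. \end{align*} (Empty sums are zero.) Then every extreme point of $P$ has all of its $\alpha,\beta,\gamma,\theta$ coordinates in $\{0,1\}$.
   Context: For integers $a\le b$, $[a,b]_{\mathbb{Z}}=\{a,a+1,\dots,b\}$. In the paper's model, $T$ is the number of time periods, $L$ and $\ell$ are the minimum-up and minimum-down time limits of a generator, $\underline{C},\overline{C}$ its generation lower/upper bounds, $\overline{V}$ its start-up/shut-down ramp rate and $V$ its ramp rate. *)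

From HB Require Import structures.
From mathcomp Require Import all_boot all_order all_algebra.
From mathcomp Require Import reals.
Set Implicit Arguments. Unset Strict Implicit. Unset Printing Implicit Defensive.
Import Order.TTheory GRing.Theory Num.Theory.
Local Open Scope ring_scope.

(* Coordinates are indexed by naturals:
   al t = alpha_t, be t k = beta_{tk}, ga t k = gamma_{tk}, th t = theta_t,
   q t k s = q^s_{tk}.  Only indices in the index sets below are genuine
   variables; membership in P forces all other coordinates to be 0. *)
Record point (R : realType) := Point {
  al : nat -> R;
  be : nat -> nat -> R;
  ga : nat -> nat -> R;
  th : nat -> R;
  qq : nat -> nat -> nat -> R }.

Definition inA (T t : nat) : bool := (1 <= t <= T)%N.
Definition inTK (T L t k : nat) : bool :=
  (1 <= t <= T)%N && (minn (t + L - 1) T <= k <= T)%N.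
Definition inG (T L l t k : nat) : bool :=
  (L <= t <= T - l - 1)%N && (t + l + 1 <= k <= T)%N.
Definition inTh (T l t : nat) : bool := (T - l <= t <= T)%N.
Definition inQ (T L t k s : nat) : bool := inTK T L t k && (t <= s <= k)%N.

Definition inP (R : realType) (T L l : nat) (Cl Cu Vb V : R) (x : point R) : Prop :=
  [/\
   [/\ forall t, ~~ inA T t -> al x t = 0,
       forall t k, ~~ inTK T L t k -> be x t k = 0,
       forall t k, ~~ inG T L l t k -> ga x t k = 0,
       forall t, ~~ inTh T l t -> th x t = 0 &
       forall t k s, ~~ inQ T L t k s -> qq x t k s = 0],
   [/\ \sum_(1 <= t < T.+1) al x t <= 1,
   forall t, inA T t ->
     - al x t + \sum_(t + L - 1 <= k < T.+1) be x t k
       - \sum_(L <= k < t - l) ga x k t = 0,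
   forall t, (L <= t <= T - l - 1)%N ->
     - \sum_(1 <= k < t.+2 - L) be x k t + \sum_(t + l + 1 <= k < T.+1) ga x t k <= 0 &
   forall t, (T - l <= t <= T)%N ->
     th x t - \sum_(1 <= k < t.+2 - L) be x k t = 0] &
   [/\
     forall t k s, inTK T L t k -> (t <= s <= k)%N ->
       Cl * be x t k <= qq x t k s /\ qq x t k s <= Cu * be x t k,
     forall t k, inTK T L t k -> qq x t k t <= Vb * be x t k,
     forall t k, inTK T L t k -> (k <= T - 1)%N -> qq x t k k <= Vb * be x t k,
     forall t k s, inTK T L t k -> (t + 1 <= s <= k)%N ->
       qq x t k (s - 1) - qq x t k s <= V * be x t k /\
       qq x t k s - qq x t k (s - 1) <= V * be x t k &
     [/\ forall t, inA T t -> 0 <= al x t,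
         forall t k, inTK T L t k -> 0 <= be x t k &
         forall t k, inG T L l t k -> 0 <= ga x t k]]].

Definition is_comb (R : realType) (lam : R) (x y z : point R) : Prop :=
  [/\ forall t, al x t = lam * al y t + (1 - lam) * al z t,
      forall t k, be x t k = lam * be y t k + (1 - lam) * be z t k,
      forall t k, ga x t k = lam * ga y t k + (1 - lam) * ga z t k,
      forall t, th x t = lam * th y t + (1 - lam) * th z t &
      forall t k s, qq x t k s = lam * qq y t k s + (1 - lam) * qq z t k s].

Definition pt_eq (R : realType) (y z : point R) : Prop :=
  [/\ forall t, al y t = al z t,
      forall t k, be y t k = be z t k,
      forall t k, ga y t k = ga z t k,
      forall t, th y t = th z t &
      forall t k s, qq y t k s = qq z t k s].

Definition extreme_point (R : realType) (T L l : nat) (Cl Cu Vb V : R) (x : point R) : Prop :=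
  inP T L l Cl Cu Vb V x /\
  forall (y z : point R) (lam : R),
    inP T L l Cl Cu Vb V y -> inP T L l Cl Cu Vb V z ->
    0 < lam < 1 -> is_comb lam x y z -> pt_eq y z.

Definition is01 (R : realType) (a : R) : Prop := a = 0 \/ a = 1.

(* Read P as a flow network on the time periods: alpha_t enters at t, beta_{tk} is an
   arc t -> k, gamma_{kt} an arc k -> t, and the flow arriving at t leaves through the
   slack of the third constraint family or through theta_t.  The q-variables only
   scale with beta, so they can be carried along by rescaling those of x.
   Let x be an extreme point.  If the alpha_t sum to 0, x is the midpoint of 0 and 2x,
   hence x = 0.  Otherwise start at some u with alpha_u > 0 and follow arcs that
   carry positive flow in x, forward in time, until the flow can leave the network.
   This gives a 0/1 point p and some 0 < lam < 1 with lam p <= x on every coordinate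
   and every slack, so x = lam p + (1 - lam) z with z in P; extremality forces x = p. *)

From HB Require Import structures.
From mathcomp Require Import all_boot all_order all_algebra.
From mathcomp Require Import reals ring lra zify.
Set Implicit Arguments. Unset Strict Implicit. Unset Printing Implicit Defensive.
Import Order.TTheory GRing.Theory Num.Theory.
Local Open Scope ring_scope.

Section NatSums.
Variable R : numDomainType.
Implicit Types (m n : nat) (F : nat -> R).

Lemma sumr_nat_eq m n j : \sum_(m <= i < n) (i == j)%:R = (m <= j < n)%:R :> R.
Proof.
have [hj|hj] := boolP (m <= j < n)%N.
  rewrite (bigD1_seq j) ?mem_index_iota ?iota_uniq //= eqxx big1 ?addr0 // => i.
  by move/negbTE->.
rewrite big_nat_cond big1 // => i /andP[hi _].
by case: eqVneq hi => // ->; rewrite (negbTE hj).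
Qed.

Lemma ler_sum_nat_term m n i F : (m <= i < n)%N -> (forall j, 0 <= F j) ->
  F i <= \sum_(m <= j < n) F j.
Proof.
move=> hi F_ge0; rewrite (bigD1_seq i) ?mem_index_iota ?iota_uniq //= lerDl.
exact: sumr_ge0.
Qed.

Lemma psumr_nat_gt0P m n F : (forall i, 0 <= F i) -> 0 < \sum_(m <= i < n) F i ->
  exists2 i, (m <= i < n)%N & 0 < F i.
Proof.
move=> F_ge0 /lt0r_neq0; rewrite psumr_neq0 // => /hasP[i].
by rewrite mem_index_iota => hi /= hFi; exists i.
Qed.

End NatSums.

Lemma sumr_subM_div (R : fieldType) (I : Type) (r : seq I) (F G : I -> R) (a c : R) :
  \sum_(i <- r) (F i - a * G i) / c = (\sum_(i <- r) F i - a * \sum_(i <- r) G i) / c.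
Proof. by rewrite -mulr_suml sumrB mulr_sumr. Qed.

Lemma is01_ge0 (R : realType) (a : R) : is01 a -> 0 <= a.
Proof. by case=> ->. Qed.

Section FlowFace.
Variables (R : realType) (T L l : nat) (Cl Cu Vb V : R).

Local Notation P := (inP T L l Cl Cu Vb V).
Local Notation extreme := (extreme_point T L l Cl Cu Vb V).

Definition beta_out (b : nat -> nat -> R) t := \sum_(t + L - 1 <= k < T.+1) b t k.
Definition gamma_in (g : nat -> nat -> R) t := \sum_(L <= k < t - l) g k t.
Definition beta_in (b : nat -> nat -> R) t := \sum_(1 <= k < t.+2 - L) b k t.
Definition gamma_out (g : nat -> nat -> R) t := \sum_(t + l + 1 <= k < T.+1) g t k.

Definition flow_feasible (y : point R) : Prop :=
  [/\ [/\ forall t, ~~ inA T t -> al y t = 0,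
          forall t k, ~~ inTK T L t k -> be y t k = 0,
          forall t k, ~~ inG T L l t k -> ga y t k = 0 &
          forall t, ~~ inTh T l t -> th y t = 0],
      [/\ \sum_(1 <= t < T.+1) al y t <= 1,
          forall t, inA T t -> - al y t + beta_out (be y) t - gamma_in (ga y) t = 0,
          forall t, (L <= t <= T - l - 1)%N -> - beta_in (be y) t + gamma_out (ga y) t <= 0 &
          forall t, (T - l <= t <= T)%N -> th y t - beta_in (be y) t = 0] &
      [/\ forall t, inA T t -> 0 <= al y t,
          forall t k, inTK T L t k -> 0 <= be y t k &
          forall t k, inG T L l t k -> 0 <= ga y t k]].

Definition flow_eq (y z : point R) : Prop :=
  [/\ al y =1 al z, be y =2 be z, ga y =2 ga z & th y =1 th z].

Definition flow_comb (lam : R) (x y z : point R) : Prop :=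
  [/\ forall t, al x t = lam * al y t + (1 - lam) * al z t,
      forall t k, be x t k = lam * be y t k + (1 - lam) * be z t k,
      forall t k, ga x t k = lam * ga y t k + (1 - lam) * ga z t k &
      forall t, th x t = lam * th y t + (1 - lam) * th z t].

Lemma inP_flow_feasible x : P x -> flow_feasible x.
Proof. by case=> [[? ? ? ? _] ? [_ _ _ _ ?]]. Qed.

Lemma flow_feasible_ge0 y : flow_feasible y ->
  [/\ forall t, 0 <= al y t, forall t k, 0 <= be y t k & forall t k, 0 <= ga y t k].
Proof.
case=> [[Sa Sb Sg _] _ [Na Nb Ng]]; split=> [t|t k|t k].
- by case: (boolP (inA T t)) => [/Na|/Sa->].
- by case: (boolP (inTK T L t k)) => [/Nb|/Sb->].
- by case: (boolP (inG T L l t k)) => [/Ng|/Sg->].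
Qed.

Lemma flow_feasible_slack_ge0 y t : flow_feasible y -> (L <= t <= T - l - 1)%N ->
  0 <= beta_in (be y) t - gamma_out (ga y) t.
Proof. by case=> _ [_ _ F3 _] _ /F3; lra. Qed.

Lemma inP_qq_eq0 x t k s : P x -> be x t k = 0 -> qq x t k s = 0.
Proof.
move=> [[_ _ _ _ Sq] _ [Cq _ _ _ _]] bx0.
have [/andP[tk ts]|/Sq//] := boolP (inQ T L t k s).
by have := Cq t k s tk ts; rewrite bx0 !mulr0 => -[? ?]; apply/eqP; rewrite eq_le; apply/andP.
Qed.

(* The q-coordinates of [x] rescaled by [be y / be x]; where [be x] vanishes the
   junk value [0^-1 = 0] makes them vanish too. *)
Definition lift (x y : point R) : point R :=
  Point (al y) (be y) (ga y) (th y) (fun t k s => qq x t k s * (be y t k / be x t k)).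

Lemma inP_lift x y : P x -> flow_feasible y ->
  (forall t k, be x t k = 0 -> be y t k = 0) -> P (lift x y).
Proof.
move=> Px fy supp; have [_ by_ge0 _] := flow_feasible_ge0 fy.
have [_ bx_ge0 _] := flow_feasible_ge0 (inP_flow_feasible Px).
have [[_ _ _ _ Sq] _ [Cq Vt Vk Rq _]] := Px.
have [[? ? ? ?] ? [? ? ?]] := fy.
have scale t k : exists2 r, 0 <= r &
    be y t k = be x t k * r /\ forall s, qq (lift x y) t k s = qq x t k s * r.
  exists (be y t k / be x t k); first by rewrite divr_ge0.
  split=> //; have [bx0|bx] := eqVneq (be x t k) 0.
    by rewrite bx0 mul0r; apply: supp.
  by rewrite mulrCA divff // mulr1.
split=> //; first by split=> //= t k s /Sq->; rewrite mul0r.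
split; last by split.
- move=> t k s tk ts; have [r r_ge0 [-> qE]] := scale t k.
  by have [? ?] := Cq t k s tk ts; rewrite qE !mulrA; split; rewrite ler_wpM2r.
- move=> t k tk; have [r r_ge0 [-> qE]] := scale t k.
  by rewrite qE mulrA ler_wpM2r // Vt.
- move=> t k tk kT; have [r r_ge0 [-> qE]] := scale t k.
  by rewrite qE mulrA ler_wpM2r // Vk.
- move=> t k s tk ts; have [r r_ge0 [-> qE]] := scale t k.
  by have [? ?] := Rq t k s tk ts; rewrite !qE mulrA -!mulrBl; split; rewrite ler_wpM2r.
Qed.

Lemma is_comb_lift x y z lam : P x -> flow_comb lam x y z ->
  is_comb lam x (lift x y) (lift x z).
Proof.
move=> Px [ca cb cg ct]; split=> // t k s /=.
have [bx0|bx] := eqVneq (be x t k) 0.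
  by rewrite (inP_qq_eq0 _ Px bx0) !mul0r !mulr0 addr0.
have -> : lam * (qq x t k s * (be y t k / be x t k)) +
    (1 - lam) * (qq x t k s * (be z t k / be x t k)) =
    qq x t k s * ((lam * be y t k + (1 - lam) * be z t k) / be x t k) by field.
by rewrite -cb divff // mulr1.
Qed.

Lemma flow_comb_beta_eq0 x y z lam t k : flow_feasible y -> flow_feasible z ->
  0 < lam < 1 -> flow_comb lam x y z -> be x t k = 0 -> be y t k = 0 /\ be z t k = 0.
Proof.
move=> fy fz /andP[lam0 lam1] [_ cb _ _]; rewrite cb => /eqP.
have [_ by_ge0 _] := flow_feasible_ge0 fy; have [_ bz_ge0 _] := flow_feasible_ge0 fz.
rewrite paddr_eq0 ?mulr_ge0 ?subr_ge0 ?(ltW lam0) ?(ltW lam1) //.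
by rewrite !mulf_eq0 (gt_eqF lam0) subr_eq0 (gt_eqF lam1) => /andP[/eqP-> /eqP->].
Qed.

Lemma extreme_flow_eq x y z lam : extreme x -> flow_feasible y -> flow_feasible z ->
  0 < lam < 1 -> flow_comb lam x y z -> flow_eq y z.
Proof.
move=> [Px ext] fy fz lam01 cx.
have Py : P (lift x y) by apply: inP_lift => // t k /(flow_comb_beta_eq0 fy fz lam01 cx)[].
have Pz : P (lift x z) by apply: inP_lift => // t k /(flow_comb_beta_eq0 fy fz lam01 cx)[].
by case: (ext _ _ _ Py Pz lam01 (is_comb_lift Px cx)).
Qed.

Definition residual (lam : R) (x p : point R) : point R :=
  Point (fun t => (al x t - lam * al p t) / (1 - lam))
        (fun t k => (be x t k - lam * be p t k) / (1 - lam))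
        (fun t k => (ga x t k - lam * ga p t k) / (1 - lam))
        (fun t => (th x t - lam * th p t) / (1 - lam))
        (fun _ _ _ => 0).

Definition dominated (lam : R) (p x : point R) : Prop :=
  [/\ forall t, lam * al p t <= al x t,
      forall t k, lam * be p t k <= be x t k,
      forall t k, lam * ga p t k <= ga x t k,
      forall t, (L <= t <= T - l - 1)%N ->
        lam * (beta_in (be p) t - gamma_out (ga p) t) <=
          beta_in (be x) t - gamma_out (ga x) t &
      \sum_(1 <= t < T.+1) al x t - lam * \sum_(1 <= t < T.+1) al p t <= 1 - lam].

Lemma flow_feasible_residual lam x p : lam < 1 -> flow_feasible x -> flow_feasible p ->
  dominated lam p x -> flow_feasible (residual lam x p).
Proof.
move=> lam1 [[Sa Sb Sg St] [_ F2 _ F4] _] [[Sa' Sb' Sg' St'] [_ F2' _ F4'] _].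
move=> [Da Db Dg Ds Dsum]; have c_gt0 : 0 < 1 - lam by rewrite subr_gt0.
have c_neq0 : 1 - lam != 0 by rewrite gt_eqF.
split.
- split=> /= [t|t k|t k|t] h;
    [rewrite Sa ?Sa' | rewrite Sb ?Sb' | rewrite Sg ?Sg' | rewrite St ?St'] => //;
    by rewrite mulr0 subrr mul0r.
- split=> /=.
  + by rewrite sumr_subM_div ler_pdivrMr // mul1r.
  + move=> t ht; rewrite /beta_out /gamma_in !sumr_subM_div
      -/(beta_out (be x) t) -/(beta_out (be p) t) -/(gamma_in (ga x) t) -/(gamma_in (ga p) t).
    have -> : beta_out (be x) t = al x t + gamma_in (ga x) t by have := F2 t ht; lra.
    have -> : beta_out (be p) t = al p t + gamma_in (ga p) t by have := F2' t ht; lra.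
    by field.
  + move=> t ht; rewrite /beta_in /gamma_out !sumr_subM_div
      -/(beta_in (be x) t) -/(beta_in (be p) t) -/(gamma_out (ga x) t) -/(gamma_out (ga p) t).
    rewrite -mulNr -mulrDl ler_pdivrMr // mul0r.
    by have := Ds t ht; rewrite mulrBr; lra.
  + move=> t ht; rewrite /beta_in sumr_subM_div -/(beta_in (be x) t) -/(beta_in (be p) t).
    have -> : th x t = beta_in (be x) t by have := F4 t ht; lra.
    have -> : th p t = beta_in (be p) t by have := F4' t ht; lra.
    by rewrite subrr.
- by split=> /= *; apply: divr_ge0; rewrite subr_ge0 ?Da ?Db ?Dg ?(ltW lam1).
Qed.

Lemma extreme_dominated_flow_eq x p lam : extreme x -> flow_feasible p ->
  0 < lam < 1 -> dominated lam p x -> flow_eq x p.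
Proof.
move=> ext fp lam01 dom; have /andP[_ lam1] := lam01.
have c_neq0 : 1 - lam != 0 by rewrite subr_eq0 eq_sym lt_eqF.
have fz := flow_feasible_residual lam1 (inP_flow_feasible ext.1) fp dom.
have cx : flow_comb lam x p (residual lam x p) by split=> * /=; field.
have [Ea Eb Eg Et] := extreme_flow_eq ext fp fz lam01 cx.
have [ca cb cg ct] := cx.
split=> [t|t k|t k|t];
  by rewrite (ca, cb, cg, ct) -(Ea, Eb, Eg, Et) -mulrDl subrKC mul1r.
Qed.

(* Every beta-arc [t -> k] then has [t <= k], so paths move forward in time. *)
Hypothesis L_gt0 : (0 < L)%N.

Definition dirac2 (u k : nat) : nat -> nat -> R := fun t i => ((t == u) && (i == k))%:R.

Lemma beta_out_dirac2 u k t : (u + L - 1 <= k <= T)%N ->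
  beta_out (dirac2 u k) t = (t == u)%:R.
Proof.
rewrite /beta_out /dirac2; have [-> hk|_ _] := eqVneq t u; last by rewrite big1.
by rewrite sumr_nat_eq ltnS hk.
Qed.

Lemma gamma_in_dirac2 k u t : (L <= k)%N -> (k + l < u)%N ->
  gamma_in (dirac2 k u) t = (t == u)%:R.
Proof.
rewrite /gamma_in /dirac2; have [-> hk ku|_ _ _] := eqVneq t u.
  by under eq_bigr do rewrite andbT; rewrite sumr_nat_eq hk; congr (_%:R); lia.
by rewrite big1 // => i; rewrite andbF.
Qed.

Lemma beta_in_dirac2 u k t : (1 <= u)%N -> (u + L - 1 <= k)%N ->
  beta_in (dirac2 u k) t = (t == k)%:R.
Proof.
rewrite /beta_in /dirac2; have [-> hu hk|_ _ _] := eqVneq t k.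
  by under eq_bigr do rewrite andbT; rewrite sumr_nat_eq hu; congr (_%:R); lia.
by rewrite big1 // => i; rewrite andbF.
Qed.

Lemma gamma_out_dirac2 k u t : (k + l + 1 <= u <= T)%N ->
  gamma_out (dirac2 k u) t = (t == k)%:R.
Proof.
rewrite /gamma_out /dirac2; have [-> hu|_ _] := eqVneq t k; last by rewrite big1.
by rewrite sumr_nat_eq ltnS hu.
Qed.

Lemma beta_outD b b' t :
  beta_out (fun t k => b t k + b' t k) t = beta_out b t + beta_out b' t.
Proof. exact: big_split. Qed.

Lemma gamma_inD g g' t :
  gamma_in (fun t k => g t k + g' t k) t = gamma_in g t + gamma_in g' t.
Proof. exact: big_split. Qed.

Lemma beta_inD b b' t :
  beta_in (fun t k => b t k + b' t k) t = beta_in b t + beta_in b' t.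
Proof. exact: big_split. Qed.

Lemma gamma_outD g g' t :
  gamma_out (fun t k => g t k + g' t k) t = gamma_out g t + gamma_out g' t.
Proof. exact: big_split. Qed.

(* [b] and [g] are the 0/1 incidence vectors of a path that starts at [u], alternates
   beta-arcs [t -> k] and gamma-arcs [k -> t'], and ends at a node [k] where [x] has
   positive slack (or where no gamma-arc leaves); [eps] times this path lies below [x]. *)
Record unit_path (x : point R) (u : nat) (b g : nat -> nat -> R) (eps : R) : Prop := {
  path_beta01 : forall t k, is01 (b t k);
  path_gamma01 : forall t k, is01 (g t k);
  path_beta_supp : forall t k, b t k != 0 -> (u <= t)%N && (t + L - 1 <= k <= T)%N;
  path_gamma_supp : forall t k, g t k != 0 -> inG T L l t k && (u <= t)%N;
  path_balance : forall t, inA T t -> beta_out b t - gamma_in g t = (t == u)%:R;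
  path_gamma_out_le : forall t, (L <= t <= T - l - 1)%N -> gamma_out g t <= beta_in b t;
  path_beta_in01 : forall t, is01 (beta_in b t);
  path_eps_gt0 : 0 < eps;
  path_beta_le : forall t k, eps * b t k <= be x t k;
  path_gamma_le : forall t k, eps * g t k <= ga x t k;
  path_slack_le : forall t, (L <= t <= T - l - 1)%N ->
    eps * (beta_in b t - gamma_out g t) <= beta_in (be x) t - gamma_out (ga x) t }.

Lemma unit_path_stop x u k eps : P x -> inA T u -> (u + L - 1 <= k <= T)%N ->
  0 < eps -> eps <= be x u k ->
  ((L <= k <= T - l - 1)%N -> eps <= beta_in (be x) k - gamma_out (ga x) k) ->
  unit_path x u (dirac2 u k) (fun _ _ => 0) eps.
Proof.
move=> Px /andP[u_ge1 _] hk eps_gt0 eps_le slack_k; have fx := inP_flow_feasible Px.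
have [_ bx_ge0 gx_ge0] := flow_feasible_ge0 fx.
have hk' : (u + L - 1 <= k)%N by case/andP: hk.
have g0 t : gamma_out (fun _ _ => 0) t = 0 :> R by rewrite /gamma_out big1.
split=> //.
- by move=> t i; rewrite /dirac2; case: (_ && _); [right|left].
- by move=> t i; left.
- by move=> t i; rewrite /dirac2; case: andP => [[/eqP-> /eqP->] _|]; rewrite ?eqxx ?leqnn.
- by move=> t i; rewrite eqxx.
- by move=> t _; rewrite beta_out_dirac2 // /gamma_in big1 ?subr0.
- by move=> t _; rewrite g0 beta_in_dirac2 // ler0n.
- by move=> t; rewrite beta_in_dirac2 //; case: (t == k); [right|left].
- move=> t i; rewrite /dirac2.
  by case: andP => [[/eqP-> /eqP->]|_]; rewrite ?mulr1 ?mulr0.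
- by move=> t i; rewrite mulr0.
- move=> t ht; rewrite g0 subr0 beta_in_dirac2 //.
  have [tk|_] := eqVneq t k; first by subst t; rewrite mulr1 slack_k.
  by rewrite mulr0 (flow_feasible_slack_ge0 fx ht).
Qed.

Lemma unit_path_cons x u k u' b g eps :
  P x -> inA T u -> (u + L - 1 <= k <= T)%N -> inG T L l k u' ->
  0 < be x u k -> 0 < ga x k u' -> unit_path x u' b g eps ->
  unit_path x u (fun t i => dirac2 u k t i + b t i) (fun t i => dirac2 k u' t i + g t i)
    (Num.min eps (Num.min (be x u k) (ga x k u'))).
Proof.
move=> Px /andP[u_ge1 _] hk hG bx_gt0 gx_gt0 path; have fx := inP_flow_feasible Px.
have [_ bx_ge0 gx_ge0] := flow_feasible_ge0 fx.
have /andP[/andP[Lk _] ku'] := hG; have /andP[hk' _] := hk.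
have lt_ku' : (k < u')%N by lia.
have lt_uu' : (u < u')%N by lia.
have b_off t i : (t < u')%N -> b t i = 0.
  move=> tu'; apply/eqP; apply: contraTT tu' => /(path_beta_supp path)/andP[h _].
  by rewrite -leqNgt.
have g_off t i : (t < u')%N -> g t i = 0.
  move=> tu'; apply/eqP; apply: contraTT tu' => /(path_gamma_supp path)/andP[_ h].
  by rewrite -leqNgt.
have b_in_k : beta_in b k = 0.
  by rewrite /beta_in big_nat_cond big1 // => j /andP[/andP[_ hj] _]; apply: b_off; lia.
have b_ge0 t i : 0 <= b t i by apply/is01_ge0/(path_beta01 path).
have g_ge0 t i : 0 <= g t i by apply/is01_ge0/(path_gamma01 path).
set eps' := Num.min _ _.
have [le_eps le_bx le_gx] : [/\ eps' <= eps, eps' <= be x u k & eps' <= ga x k u'].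
  by rewrite !ge_min !lexx !orbT.
split.
- move=> t i; rewrite /dirac2; case: andP => [[/eqP-> /eqP->]|_].
    by rewrite (b_off _ _ lt_uu') addr0; right.
  by rewrite add0r; apply: path_beta01 path t i.
- move=> t i; rewrite /dirac2; case: andP => [[/eqP-> /eqP->]|_].
    by rewrite (g_off _ _ lt_ku') addr0; right.
  by rewrite add0r; apply: path_gamma01 path t i.
- move=> t i; rewrite /dirac2; case: andP => [[/eqP-> /eqP->] _|_]; first by rewrite leqnn.
  rewrite add0r => /(path_beta_supp path)/andP[ut ->].
  by rewrite andbT (leq_trans (ltnW lt_uu')).
- move=> t i; rewrite /dirac2; case: andP => [[/eqP-> /eqP->] _|_]; first by rewrite hG; lia.
  by rewrite add0r => /(path_gamma_supp path)/andP[-> ut]; rewrite (leq_trans (ltnW lt_uu')).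
- move=> t ht; rewrite beta_outD gamma_inD beta_out_dirac2 // gamma_in_dirac2 //; last by lia.
  by have := path_balance path ht; lra.
- move=> t ht; rewrite gamma_outD beta_inD gamma_out_dirac2 // beta_in_dirac2 //.
  by rewrite lerD2l (path_gamma_out_le path ht).
- move=> t; rewrite beta_inD beta_in_dirac2 //.
  have [->|_] := eqVneq t k; first by rewrite b_in_k addr0; right.
  by rewrite add0r; apply: path_beta_in01 path t.
- by rewrite !lt_min (path_eps_gt0 path) bx_gt0 gx_gt0.
- move=> t i; rewrite /dirac2; case: andP => [[/eqP-> /eqP->]|_].
    by rewrite (b_off _ _ lt_uu') addr0 mulr1.
  by rewrite add0r (le_trans _ (path_beta_le path t i)) // ler_wpM2r.
- move=> t i; rewrite /dirac2; case: andP => [[/eqP-> /eqP->]|_].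
    by rewrite (g_off _ _ lt_ku') addr0 mulr1.
  by rewrite add0r (le_trans _ (path_gamma_le path t i)) // ler_wpM2r.
- move=> t ht; rewrite gamma_outD beta_inD gamma_out_dirac2 // beta_in_dirac2 //.
  rewrite [_ + beta_in b t]addrC addrKA (le_trans _ (path_slack_le path ht)) // ler_wpM2r //.
  by rewrite subr_ge0 (path_gamma_out_le path ht).
Qed.

Lemma unit_path_exists x u : P x -> inA T u -> 0 < beta_out (be x) u ->
  exists b g eps, unit_path x u b g eps.
Proof.
move=> Px; have fx := inP_flow_feasible Px.
have [a_ge0 bx_ge0 gx_ge0] := flow_feasible_ge0 fx.
have [_ [_ balance _ _] _] := fx.
have [n] := ubnP (T - u); elim: n u => // n IH u /ltnSE hn hu bo_gt0.
have [k hk bx_gt0] := psumr_nat_gt0P (bx_ge0 u) bo_gt0; rewrite ltnS in hk.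
have [hr|hr] := boolP (L <= k <= T - l - 1)%N; last first.
  by exists (dirac2 u k), (fun _ _ => 0), (be x u k); apply: unit_path_stop => // /(negP hr).
have [slack_gt0|slack_le0] := ltrP (gamma_out (ga x) k) (beta_in (be x) k).
  exists (dirac2 u k), (fun _ _ => 0),
    (Num.min (be x u k) (beta_in (be x) k - gamma_out (ga x) k)).
  by apply: unit_path_stop; rewrite // ?lt_min ?bx_gt0 ?subr_gt0 // ?ge_min ?lexx ?orbT.
have go_gt0 : 0 < gamma_out (ga x) k.
  apply: lt_le_trans slack_le0; apply: lt_le_trans bx_gt0 _.
  by apply: (ler_sum_nat_term (F := fun j => be x j k)) => //; move: hu; rewrite /inA; lia.
have [u' hu' gx_gt0] := psumr_nat_gt0P (gx_ge0 k) go_gt0.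
have hG : inG T L l k u' by rewrite /inG hr; lia.
have hu'A : inA T u' by rewrite /inA; lia.
have bo'_gt0 : 0 < beta_out (be x) u'.
  have : ga x k u' <= gamma_in (ga x) u'.
    by apply: (ler_sum_nat_term (F := fun j => ga x j u')) => //; lia.
  by have := balance u' hu'A; have := a_ge0 u'; lra.
have [b [g [eps path]]] := IH u' ltac:(lia) hu'A bo'_gt0.
by eexists _, _, _; apply: unit_path_cons Px hu hk hG bx_gt0 gx_gt0 path.
Qed.

Definition path_point (u : nat) (b g : nat -> nat -> R) : point R :=
  Point (fun t => (t == u)%:R) b g (fun t => if inTh T l t then beta_in b t else 0)
        (fun _ _ _ => 0).

Definition zero_point : point R :=
  Point (fun _ => 0) (fun _ _ => 0) (fun _ _ => 0) (fun _ => 0) (fun _ _ _ => 0).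

Definition flow01 (y : point R) : Prop :=
  [/\ forall t, is01 (al y t), forall t k, is01 (be y t k),
      forall t k, is01 (ga y t k) & forall t, is01 (th y t)].

Lemma flow_eq_flow01 y z : flow_eq y z -> flow01 z -> flow01 y.
Proof. by move=> [Ea Eb Eg Et] [Za Zb Zg Zt]; split=> *; rewrite (Ea, Eb, Eg, Et). Qed.

Lemma path_point_flow01 x u b g eps : unit_path x u b g eps -> flow01 (path_point u b g).
Proof.
move=> path; split=> /= [t|t k|t k|t].
- by case: (t == u); [right|left].
- exact: path_beta01 path t k.
- exact: path_gamma01 path t k.
- by case: ifP => _; [apply: path_beta_in01 path t | left].
Qed.

Lemma path_point_flow_feasible x u b g eps : inA T u -> unit_path x u b g eps ->
  flow_feasible (path_point u b g).
Proof.
move=> hu path; have /andP[u_ge1 u_leT] := hu; split.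
- split=> /= [t|t k|t k|t].
  + by case: eqVneq => // ->; rewrite hu.
  + by apply: contraNeq => /(path_beta_supp path) /andP[ut hk]; rewrite /inTK; lia.
  + by apply: contraNeq => /(path_gamma_supp path) /andP[].
  + by move/negbTE->.
- split=> /=.
  + by rewrite sumr_nat_eq ltnS u_ge1 u_leT.
  + by move=> t ht; have := path_balance path ht; lra.
  + by move=> t ht; have := path_gamma_out_le path ht; lra.
  + by move=> t ht; rewrite /inTh ht subrr.
- split=> /= [t _|t k _|t k _]; first exact: ler0n.
  + exact/is01_ge0/(path_beta01 path).
  + exact/is01_ge0/(path_gamma01 path).
Qed.

Lemma flow_feasible_zero : flow_feasible zero_point.
Proof.
by split; split=> //= *; rewrite /beta_out /gamma_in /beta_in /gamma_out ?big1 //; lra.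
Qed.

Lemma unit_path_dominated x u b g eps lam : P x -> inA T u -> unit_path x u b g eps ->
  lam <= eps -> lam <= al x u -> dominated lam (path_point u b g) x.
Proof.
move=> Px hu path le_eps le_al; have /andP[u_ge1 u_leT] := hu.
have fx := inP_flow_feasible Px; have [a_ge0 _ _] := flow_feasible_ge0 fx.
have [_ [sum_le1 _ _ _] _] := fx.
have below_eps c d : 0 <= c -> eps * c <= d -> lam * c <= d.
  by move=> c_ge0; apply: le_trans; rewrite ler_wpM2r.
split=> /=.
- by move=> t; have [->|_] := eqVneq t u; rewrite ?mulr1 ?mulr0.
- move=> t k; apply: below_eps (path_beta_le path t k).
  exact/is01_ge0/(path_beta01 path).
- move=> t k; apply: below_eps (path_gamma_le path t k).
  exact/is01_ge0/(path_gamma01 path).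
- move=> t ht; apply: below_eps (path_slack_le path ht).
  by rewrite subr_ge0 (path_gamma_out_le path ht).
- by rewrite sumr_nat_eq ltnS u_ge1 u_leT mulr1 lerB.
Qed.

Lemma zero_point_dominated x lam : P x -> \sum_(1 <= t < T.+1) al x t <= 1 - lam ->
  dominated lam zero_point x.
Proof.
move=> Px sum_le; have fx := inP_flow_feasible Px.
have [a_ge0 bx_ge0 gx_ge0] := flow_feasible_ge0 fx.
split=> /= [t|t k|t k|t ht|]; rewrite ?mulr0 //.
- rewrite {1}/beta_in {1}/gamma_out !big1 // subrr mulr0.
  exact: flow_feasible_slack_ge0 fx ht.
- by rewrite big1_eq mulr0 subr0.
Qed.

Lemma extreme_flow01 x : extreme x -> flow01 x.
Proof.
move=> ext; have Px := ext.1; have fx := inP_flow_feasible Px.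
have [a_ge0 _ gx_ge0] := flow_feasible_ge0 fx; have [_ [_ balance _ _] _] := fx.
have : 0 <= \sum_(1 <= t < T.+1) al x t by apply: sumr_ge0 => t _; apply: a_ge0.
rewrite le0r => /orP[/eqP sum_eq0|sum_gt0].
  apply: (flow_eq_flow01 (z := zero_point)); last by split=> *; left.
  apply: (extreme_dominated_flow_eq (lam := 1 / 2)) ext flow_feasible_zero _ _.
  - by apply/andP; split; lra.
  - by apply: zero_point_dominated Px _; rewrite ?sum_eq0; lra.
have [u /andP[u_ge1 u_leT] al_gt0] := psumr_nat_gt0P a_ge0 sum_gt0; rewrite ltnS in u_leT.
have hu : inA T u by rewrite /inA u_ge1.
have bo_gt0 : 0 < beta_out (be x) u.
  have : 0 <= gamma_in (ga x) u by apply: sumr_ge0 => k _; apply: gx_ge0.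
  by have := balance u hu; lra.
have [b [g [eps path]]] := unit_path_exists Px hu bo_gt0.
set lam := Num.min eps (Num.min (al x u) (1 / 2)).
have [le_eps le_al le_half] : [/\ lam <= eps, lam <= al x u & lam <= 1 / 2].
  by rewrite !ge_min !lexx !orbT.
have lam_gt0 : 0 < lam by rewrite !lt_min (path_eps_gt0 path) al_gt0 divr_gt0.
apply: flow_eq_flow01 (path_point_flow01 path).
apply: (extreme_dominated_flow_eq (lam := lam)) ext (path_point_flow_feasible hu path) _ _.
- by rewrite lam_gt0 (le_lt_trans le_half) //; lra.
- exact: unit_path_dominated Px hu path le_eps le_al.
Qed.

End FlowFace.

Theorem lemma1 (R : realType) (T L l : nat) (Cl Cu Vb V : R)
  (hT : (0 < T)%N) (hL : (0 < L)%N) (hl : (0 < l)%N) (x : point R) :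
  extreme_point T L l Cl Cu Vb V x ->
  [/\ forall t, inA T t -> is01 (al x t),
      forall t k, inTK T L t k -> is01 (be x t k),
      forall t k, inG T L l t k -> is01 (ga x t k) &
      forall t, inTh T l t -> is01 (th x t)].
Proof.
by move=> /(extreme_flow01 hL)[x_al x_be x_ga x_th]; split=> *.
Qed.
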